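(* Let $r,t\ge2$ be integers and let $m$ be any integer with $m\ge\log_2 t$. Then there exists a $(k_{t-1},b_r)$ resolvable configuration with $k=r^m$.
   Context: A $(k_{t-1},b_r)$ configuration is a pair $(X,\mathcal A)$ where $X$ is a set of $k$ points and $\mathcal A$ is a collection of $b$ subsets of $X$ (lines) such that (1) each line contains exactly $r$ points, (2) each point belongs to exactly $t-1$ lines, and (3) every pair of distinct points belongs to at most one line. It is resolvable if moreover (4) the lines can be partitioned into $t-1$ parallel classes, where a parallel class is a set of lines partitioning $X$. *)

From mathcomp Require Import all_boot.
Set Implicit Arguments. Unset Strict Implicit. Unset Printing Implicit Defensive.

(* A (k_{t-1}, b_r) configuration on the point set T (k = #|T|, b = #|L|):
   L is the set of lines. *)
Definition configuration (T : finType) (L : {set {set T}}) (r t : nat) : Prop :=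
  [/\ (forall l, l \in L -> #|l| = r),
      (forall x : T, #|[set l in L | x \in l]| = t.-1)
    & (forall x y : T, x != y -> #|[set l in L | (x \in l) && (y \in l)]| <= 1)].

Definition parallel_class (T : finType) (C : {set {set T}}) : Prop :=
  partition C [set: T].

Definition resolvable_configuration (T : finType) (L : {set {set T}}) (r t : nat)
  : Prop :=
  configuration L r t /\
  exists P : {set {set {set T}}},
    [/\ partition P L, #|P| = t.-1 & forall C, C \in P -> parallel_class C].

From mathcomp Require Import all_boot all_fingroup all_algebra.
Set Implicit Arguments. Unset Strict Implicit. Unset Printing Implicit Defensive.
Import GRing.Theory.

(* In any finite group, the right cosets of a family of subgroups of order r
   that pairwise meet trivially form a resolvable configuration: the cosets of
   one subgroup are a parallel class, and distinct points x, y lie on a common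
   coset of H only when y x^-1 is in H, which happens for at most one member of
   the family.  In (Z/rZ)^m, the subgroups H_S = {a 1_S | a in Z/rZ} for
   nonempty S in {0, ..., m-1} have order r and meet trivially, since a 1_S with
   a <> 0 has support exactly S; there are 2^m - 1 >= t - 1 of them.
   Configurations only depend on the number of points, so the construction
   transfers to 'I_(r ^ m). *)

Lemma setId_imset (aT rT : finType) (h : aT -> rT) (A : {set aT}) (p : pred rT) :
  [set y in h @: A | p y] = h @: [set x in A | p (h x)].
Proof.
apply/setP => y; rewrite inE; apply/andP/imsetP => [[/imsetP[x Ax ->] px] | [x]].
  by exists x; rewrite // inE Ax.
by rewrite inE => /andP[Ax px] ->; rewrite imset_f.
Qed.

Lemma exists_subset_card (T : finType) (A : {set T}) k :
  k <= #|A| -> exists2 B : {set T}, B \subset A & #|B| = k.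
Proof.
case/card_geqP => s [uniq_s <- sA]; exists [set:: s].
  by apply/subsetP => x; rewrite inE; apply: sA.
by rewrite cardsE (card_uniqP uniq_s).
Qed.

Section Relabel.
Variables (T T' : finType) (f : T -> T') (g : T' -> T).
Hypotheses (fK : cancel f g) (gK : cancel g f).

Let f_inj : injective f := can_inj fK.
Let F_inj : injective (fun l : {set T} => f @: l) := imset_inj f_inj.

Lemma mem_imset_can (l : {set T}) y : (y \in f @: l) = (g y \in l).
Proof. by rewrite -{1}[y]gK mem_imset. Qed.

Lemma imset_canT : f @: [set: T] = [set: T'].
Proof. by apply/setP => y; rewrite mem_imset_can !inE. Qed.

Lemma configuration_imset (L : {set {set T}}) r t :
  configuration L r t -> configuration [set f @: l | l : {set T} in L] r t.
Proof.
case=> card_line deg pair; split.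
- by move=> _ /imsetP[l Ll ->]; rewrite (card_imset _ f_inj) card_line.
- move=> y; rewrite setId_imset card_imset // -(deg (g y)).
  by apply: eq_card => l; rewrite !inE mem_imset_can.
- move=> x y xy; rewrite setId_imset card_imset //.
  have gxy : g x != g y by apply: contra xy => /eqP/(can_inj gK)/eqP.
  apply: leq_trans (pair _ _ gxy); apply: subset_leq_card.
  by apply/subsetP => l; rewrite !inE !mem_imset_can.
Qed.

Lemma resolvable_configuration_imset (L : {set {set T}}) r t :
  resolvable_configuration L r t ->
  resolvable_configuration [set f @: l | l : {set T} in L] r t.
Proof.
case=> /configuration_imset conf [P [partP cardP parP]]; split => //.
exists [set [set f @: l | l : {set T} in C] | C : {set {set T}} in P]; split.
- by rewrite imset_partition.
- by rewrite card_imset // => C C' /imset_inj; apply.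
- move=> _ /imsetP[C PC ->]; rewrite /parallel_class -imset_canT.
  by rewrite imset_partition //; apply: parP.
Qed.

End Relabel.

Lemma resolvable_configuration_card (T T' : finType) r t :
  #|T| = #|T'| ->
  (exists L : {set {set T}}, resolvable_configuration L r t) ->
  exists L' : {set {set T'}}, resolvable_configuration L' r t.
Proof.
move=> eqTT' [L resL].
pose f (x : T) : T' := enum_val (cast_ord eqTT' (enum_rank x)).
pose g (y : T') : T := enum_val (cast_ord (esym eqTT') (enum_rank y)).
have fK : cancel f g by move=> x; rewrite /f /g enum_valK cast_ordK enum_rankK.
have gK : cancel g f by move=> y; rewrite /f /g enum_valK cast_ordKV enum_rankK.
by eexists; apply: (resolvable_configuration_imset fK gK resL).
Qed.

Section CosetLines.
Local Open Scope group_scope.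
Variables (gT : finGroupType) (D : {set {group gT}}) (r : nat).
Hypotheses (card_D : {in D, forall H : {group gT}, #|H| = r})
           (tiD : {in D &, forall H K : {group gT}, H != K -> H :&: K = 1}).

Lemma rcoset_group_inj (H K : {group gT}) x y : H :* x = K :* y -> H = K.
Proof.
move=> eqHK; have xK : x \in K :* y by rewrite -eqHK rcoset_refl.
move: eqHK; rewrite -(rcoset_eqP xK) => /(congr1 (fun A => A :* x^-1)).
by rewrite !rcosetK => /val_inj.
Qed.

Definition coset_lines : {set {set gT}} := \bigcup_(H in D) rcosets H [set: gT].

Lemma coset_linesP l :
  reflect (exists2 H, H \in D & exists x, l = H :* x) (l \in coset_lines).
Proof.
apply: (iffP bigcupP) => [[H DH /rcosetsP[x _ ->]] | [H DH [x ->]]].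
  by exists H => //; exists x.
by exists H => //; apply/rcosetsP; exists x; rewrite ?inE.
Qed.

Lemma coset_line_through x l :
  l \in coset_lines -> x \in l -> exists2 H, H \in D & l = H :* x.
Proof. by case/coset_linesP => H DH [y ->] /rcoset_eqP<-; exists H. Qed.

Lemma coset_lines_through x :
  [set l in coset_lines | x \in l] = [set H :* x | H : {group gT} in D].
Proof.
apply/setP => l; rewrite inE; apply/andP/imsetP => [[Ll /(coset_line_through Ll)] //|].
case=> H DH ->; split; last exact: rcoset_refl.
by apply/coset_linesP; exists H => //; exists x.
Qed.

Lemma coset_lines_configuration : configuration coset_lines r #|D|.+1.
Proof.
split.
- by move=> _ /coset_linesP[H DH [x ->]]; rewrite card_rcoset card_D.
- move=> x; rewrite coset_lines_through card_in_imset //.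
  by move=> H K _ _; apply: rcoset_group_inj.
- move=> x y xy; apply/card_le1_eqP => l1 l2.
  rewrite !inE => /and3P[Ll1 xl1 yl1] /and3P[Ll2 xl2 yl2].
  have [H DH defl1] := coset_line_through Ll1 xl1.
  have [K DK defl2] := coset_line_through Ll2 xl2.
  rewrite defl1 defl2 in yl1 yl2 *.
  have [-> // | neqHK] := eqVneq H K.
  have : y * x^-1 \in H :&: K by rewrite inE -!mem_rcoset yl1 yl2.
  by rewrite tiD // inE -eq_mulgV1 eq_sym (negPf xy).
Qed.

Lemma coset_lines_resolvable : resolvable_configuration coset_lines r #|D|.+1.
Proof.
split; first exact: coset_lines_configuration.
pose B (H : {group gT}) := rcosets H [set: gT].
have [partB injB] : partition [set B H | H in D] (cover [set B H | H in D])
                    /\ {in D &, injective B}.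
  apply: indexed_partition => [H K _ _ neqKH | H _].
    apply/pred0P => l /=; apply/negbTE/andP.
    case=> /rcosetsP[x _ ->] /rcosetsP[y _ /rcoset_group_inj eqHK].
    by rewrite eqHK eqxx in neqKH.
  by apply/set0Pn; exists (H :* 1); apply/rcosetsP; exists 1; rewrite ?inE.
exists [set B H | H in D]; split.
- by rewrite /coset_lines -cover_imset.
- by rewrite card_in_imset.
- by move=> _ /imsetP[H _ ->]; apply: rcosets_partition; apply: subsetT.
Qed.

End CosetLines.

Section IndicatorRows.
Variables (G : finZmodType) (m : nat).
Local Open Scope ring_scope.

Definition ind_row (S : {set 'I_m}) (a : G) : 'rV[G]_m :=
  \row_i (if i \in S then a else 0).

Lemma ind_row0 S : ind_row S 0 = 0.
Proof. by apply/rowP => i; rewrite !mxE if_same. Qed.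

Lemma ind_rowD S a b : ind_row S (a + b) = ind_row S a + ind_row S b.
Proof. by apply/rowP => i; rewrite !mxE; case: ifP; rewrite ?addr0. Qed.

Lemma ind_row_inj S : S != set0 -> injective (ind_row S).
Proof. by case/set0Pn => i Si a b /rowP/(_ i); rewrite !mxE Si. Qed.

Lemma ind_row_supp S a : a != 0 -> [set i | ind_row S a 0 i != 0] = S.
Proof. by move=> a0; apply/setP => i; rewrite inE mxE; case: (i \in S); rewrite ?eqxx. Qed.

Lemma ind_row_group_set S : group_set (ind_row S @: [set: G]).
Proof.
apply/group_setP; split; first by apply/imsetP; exists 0; rewrite ?inE ?ind_row0.
move=> _ _ /imsetP[a _ ->] /imsetP[b _ ->]; apply/imsetP; exists (a + b).
  by rewrite inE.
by rewrite ind_rowD.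
Qed.

Definition ind_group S : {group 'rV[G]_m} := Group (ind_row_group_set S).

Lemma card_ind_group S : S != set0 -> #|ind_group S| = #|G|.
Proof. by move=> S0; rewrite card_imset ?cardsT //; apply: ind_row_inj. Qed.

Lemma ind_groupI S S' : S != S' -> (ind_group S :&: ind_group S' = 1)%g.
Proof.
move=> neqS; apply/trivgP/subsetP => _ /setIP[/imsetP[a _ ->] /imsetP[b _ eqab]].
rewrite inE; have [-> | a0] := eqVneq a 0; first by rewrite ind_row0.
have [b0 | b0] := eqVneq b 0; first by rewrite eqab b0 ind_row0.
by rewrite -(ind_row_supp S a0) eqab ind_row_supp // eqxx in neqS.
Qed.

End IndicatorRows.

Lemma resolvable_configuration_rV (G : finZmodType) m k :
  1 < #|G| -> k < 2 ^ m ->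
  exists L : {set {set 'rV[G]_m}}, resolvable_configuration L #|G| k.+1.
Proof.
move=> G_gt1 k_lt.
have [Ds sDs cardDs] :
    exists2 Ds : {set {set 'I_m}}, Ds \subset powerset [set: 'I_m] :\ set0 & #|Ds| = k.
  apply: exists_subset_card; have := cardsD1 set0 (powerset [set: 'I_m]).
  by rewrite card_powerset cardsT card_ord powersetE sub0set add1n -ltnS => <-.
have Ds_neq0 S : S \in Ds -> S != set0.
  by move/(subsetP sDs); rewrite in_setD1 => /andP[].
have inj_Ds : {in Ds &, injective (@ind_group G m)}.
  move=> S S' DS _ eqSS'; apply/eqP; apply: contraTT G_gt1 => neqSS'.
  rewrite -(card_ind_group G (Ds_neq0 S DS)) -(setIid (ind_group G S)).
  by rewrite {2}eqSS' ind_groupI // cards1.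
exists (coset_lines [set ind_group G S | S in Ds]).
rewrite -cardDs -(card_in_imset inj_Ds).
apply: coset_lines_resolvable.
  by move=> _ /imsetP[S DS ->]; apply/card_ind_group/Ds_neq0.
move=> _ _ /imsetP[S _ ->] /imsetP[S' _ ->] neq.
by apply: ind_groupI; apply: contraNneq neq => ->.
Qed.

Theorem lemma10 (r t m : nat) :
  2 <= r -> 2 <= t -> t <= 2 ^ m ->
  exists L : {set {set 'I_(r ^ m)}}, resolvable_configuration L r t.
Proof.
case: r => [|[|n]] // _ t_gt1 t_le.
apply: (@resolvable_configuration_card 'rV['I_n.+2]_m).
  by rewrite card_mx !card_ord mul1n.
have := @resolvable_configuration_rV 'I_n.+2 m t.-1.
by rewrite card_ord prednK ?(ltnW t_gt1) //; apply.
Qed.
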